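(* Let $q$ be a prime power, $e\ge2$ and $k\ge2$ integers, and $n=3^ek$. For $i=1,\dots,e$ put $K_i=3^{i-1}k$, fix a primitive element $\omega_i$ of $\mathbb{F}_{q^{K_i}}$ and $\gamma_i\in\mathbb{F}_{q^{3K_i}}$ with $\mathbb{F}_{q^{K_i}}(\gamma_i)=\mathbb{F}_{q^{3K_i}}$, and for $a\in\mathbb{F}_{q^{K_i}}$, $j\in\{0,\dots,q-2\}$ define $\Phi_{i,a,j}:\mathbb{F}_{q^{K_i}}\to\mathbb{F}_{q^{3K_i}}$, $\Phi_{i,a,j}(u)=u+\omega_i^j(u^q+au)\gamma_i$. Let $\mathcal{D}_1=\bigcup_{a,j}\mathrm{Orb}_{\mathbb{F}_{q^{3k}}^*}(\Phi_{1,a,j}(\mathbb{F}_{q^k}))\subseteq\mathcal{G}_q(3k,k)$ and, for $i=2,\dots,e$, $\mathcal{D}_i=\{\beta\,\Phi_{i,a,j}(U):\beta\in\mathbb{F}_{q^{3K_i}}^*,\ a\in\mathbb{F}_{q^{K_i}},\ 0\le j\le q-2,\ U\in\mathcal{D}_{i-1}\}\subseteq\mathcal{G}_q(3^ik,k)$, and let ${}_{3^e}\mathcal{C}_k=\mathcal{D}_e$ (a cyclic subspace code in $\mathcal{G}_q(n,k)$ with minimum distance $2k-2$). Then $$\lim_{k\to\infty}\frac{|{}_{3^e}\mathcal{C}_k|}{J_q(3^ek,2k-2,k)}=1\quad(q\text{ fixed}),\qquad\lim_{q\to\infty}\frac{|{}_{3^e}\mathcal{C}_k|}{J_q(3^ek,2k-2,k)}=1\quad(k\text{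 fixed}),$$ i.e. the family is asymptotically optimal in $k$ and in $q$.
   Context: $\mathcal{G}_q(N,k)$ is the set of $k$-dimensional $\mathbb{F}_q$-subspaces of $\mathbb{F}_{q^N}$; $\mathrm{Orb}_{\mathbb{F}_{q^N}^*}(V)=\{\beta V:\beta\in\mathbb{F}_{q^N}^*\}$. The Johnson type bound II quantity for minimum distance $2k-2$ is $J_q(n,2k-2,k)=\left\lfloor\frac{q^n-1}{q^k-1}\left\lfloor\frac{q^{n-1}-1}{q^{k-1}-1}\right\rfloor\right\rfloor$, an upper bound on the size of any subspace code in $\mathcal{G}_q(n,k)$ with minimum subspace distance $2k-2$ (subspace distance $d(U,V)=\dim(U+V)-\dim(U\cap V)$). $|\cdot|$ denotes cardinality of a code as a set of subspaces. *)

From HB Require Import structures.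
From mathcomp Require Import all_boot all_order all_algebra.
Set Implicit Arguments. Unset Strict Implicit. Unset Printing Implicit Defensive.
Import Order.TTheory GRing.Theory Num.Theory.
Local Open Scope ring_scope.

Definition prime_power (q : nat) : Prop :=
  exists p r : nat, prime p /\ (0 < r)%N /\ q = (p ^ r)%N.

(* Johnson type bound II for distance 2k-2:
   floor( (q^n-1)/(q^k-1) * floor((q^(n-1)-1)/(q^(k-1)-1)) ).
   Since the inner floor is an integer m, floor(a/b * m) = (a*m) div b. *)
Definition Jq (q n k : nat) : nat :=
  (((q ^ n - 1) * ((q ^ (n - 1) - 1) %/ (q ^ (k - 1) - 1))) %/ (q ^ k - 1))%N.

Section Construction.
Variable L : finFieldType.

(* The subfield F_{q^m} of L, as the set of roots of X^{q^m} - X. *)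
Definition Fq (q m : nat) : {set L} := [set x : L | x ^+ (q ^ m)%N == x].

Definition primitive_in (q m : nat) (w : L) : Prop :=
  w \in Fq q m /\ (forall x, x \in Fq q m -> x != 0 -> exists t : nat, x = w ^+ t).

Definition is_subfield (F : {set L}) : bool :=
  [&& 0 \in F, 1 \in F,
      [forall x in F, forall y in F, (x - y \in F) && (x * y \in F)]
    & [forall x in F, x^-1 \in F]].

Definition gen_field (S : {set L}) : {set L} :=
  \bigcap_(F : {set L} | is_subfield F && (S \subset F)) F.

Definition Kdim (k i : nat) : nat := (3 ^ (i - 1) * k)%N.

Definition Phi (q : nat) (om gam : nat -> L) (i : nat) (a : L) (j : nat) (u : L) : L :=
  u + om i ^+ j * (u ^+ q + a * u) * gam i.

Definition orb (q N : nat) (V : {set L}) : {set {set L}} :=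
  [set [set b * v | v in V] | b in Fq q N :\ 0].

Definition D1 (q : nat) (om gam : nat -> L) (k : nat) : {set {set L}} :=
  \bigcup_(a in Fq q k) \bigcup_(j < q.-1)
     orb q (3 * k) [set Phi q om gam 1 a j u | u in Fq q k].

Definition Dstep (q : nat) (om gam : nat -> L) (k i : nat) (D : {set {set L}})
  : {set {set L}} :=
  \bigcup_(a in Fq q (Kdim k i)) \bigcup_(j < q.-1) \bigcup_(U in D)
     [set [set b * Phi q om gam i a j u | u in U] | b in Fq q (3 * Kdim k i) :\ 0].

(* D_i for i >= 1 (D_0 is an unused dummy) *)
Fixpoint Dcode (q : nat) (om gam : nat -> L) (k i : nat) : {set {set L}} :=
  match i with
  | 0 => set0
  | 1 => D1 q om gam k
  | i'.+1 => Dstep q om gam k i (Dcode q om gam k i')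
  end.

Definition valid_choice (q e k : nat) (om gam : nat -> L) : Prop :=
  forall i, (1 <= i <= e)%N ->
    [/\ primitive_in q (Kdim k i) (om i),
        gam i \in Fq q (3 * Kdim k i)
      & gen_field (Fq q (Kdim k i) :|: [set gam i]) = Fq q (3 * Kdim k i)].

End Construction.

Definition code_ratio (L : finFieldType) (q e k : nat) (om gam : nat -> L) : rat :=
  (#|Dcode q om gam k e|)%:R / (Jq q (3 ^ e * k) k)%:R.

(* Write E = F_{q^{3K}} = F(γ) over F = F_{q^K}, so that 1, γ, γ^2 is an F-basis of E.
   Let U, U' ⊆ F be F_q^*-stable with more than q elements.  If
   β Φ_{a,j}(U) = β' Φ_{a',j'}(U'), the γ^2-coordinate of (β/β') Φ_{a,j}(u) is a
   q-linearised polynomial in u of degree q vanishing on U, which forces β/β' ∈ F;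
   comparing the remaining coordinates and using that ω is primitive then gives a = a',
   j = j', β/β' ∈ F_q^* and U = U'.  Each step of the construction therefore multiplies
   the size by q^K (q^{3K} - 1), so
   |D_e| = ∏_i q^{K_i} (q^{3K_i} - 1) = q^{2(n-k)} ∏_i (1 - q^{-3K_i}).
   Both floors in J_q(n, 2k-2, k) are q^{n-k} (1 + O(q^{1-k})), so the ratio differs
   from 1 by at most (e + 4) / q^{k-1}, which tends to 0 as k or q grows. *)

From HB Require Import structures.
From mathcomp Require Import all_boot all_order all_algebra finfield cyclic.
From mathcomp Require Import zify ring lra.
Import Order.TTheory GRing.Theory Num.Theory.
Local Open Scope ring_scope.
Set Implicit Arguments. Unset Strict Implicit. Unset Printing Implicit Defensive.

Lemma subn1_dvd_expn (a t : nat) : (a - 1 %| a ^ t - 1)%N.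
Proof. by rewrite !subn1 predn_exp dvdn_mulr. Qed.

Lemma card_uniform_fibers (T T' : finType) (f : T -> T') (A : {set T}) c :
  {in A, forall x, #|[set y in A | f y == f x]| = c} -> #|A| = (c * #|f @: A|)%N.
Proof.
move=> fibA; rewrite -sum1_card (partition_big_imset f) /= mulnC -sum_nat_const.
apply: eq_bigr => _ /imsetP[x xA ->]; rewrite -(fibA x xA) -sum1_card.
by apply: eq_bigl => y; rewrite inE.
Qed.

Lemma coef_XqX_eq0 (R : finIdomainType) q (al be : R) (U : {set R}) :
  (1 < q)%N -> (q < #|U|)%N -> {in U, forall u, al * u ^+ q + be * u = 0} ->
  al = 0 /\ be = 0.
Proof.
move=> q_gt1 cardU rootU; pose p : {poly R} := al *: 'X^q + be *: 'X.
have p0 : p = 0.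
  apply: contraTeq cardU => p_neq0; rewrite -leqNgt cardE -ltnS.
  apply: leq_trans (max_poly_roots p_neq0 _ _) _.
  - by apply/allP=> u; rewrite mem_enum => uU; rewrite /root !hornerE rootU.
  - exact: enum_uniq.
  apply: leq_trans (size_polyD _ _) _; rewrite geq_max.
  rewrite (leq_trans (size_scale_leq _ _)) ?size_polyXn //.
  by rewrite (leq_trans (size_scale_leq _ _)) ?size_polyX // ltnS ltnW.
have q_neq1 : (q != 1)%N by rewrite gtn_eqF.
have coef_p i : p`_i = al * (i == q)%:R + be * (i == 1%N)%:R.
  by rewrite coefD !coefZ coefXn coefX.
move: (congr1 (coefp q) p0) (congr1 (coefp 1) p0) => /=.
rewrite !coef_p !coef0 !eqxx (negbTE q_neq1) eq_sym (negbTE q_neq1) /=.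
by rewrite !mulr0 !mulr1 addr0 add0r => -> ->.
Qed.

Lemma finField_invr_closed (F : finFieldType) (S : {pred F}) :
  1 \in S -> {in S &, forall x y, x * y \in S} -> {in S, forall x, x^-1 \in S}.
Proof.
move=> S1 SM x xS; have [x0 | x_neq0] := eqVneq x 0; first by rewrite x0 invr0 -x0.
have SX t : x ^+ t \in S by elim: t => [|t IH]; rewrite ?expr0 // exprS SM.
have cardF : #|F| = (#|F| - 2)%N.+2 by rewrite -addn2 subnK ?finNzRing_gt1.
suff -> : x^-1 = x ^+ (#|F| - 2)%N by [].
apply: (mulfI x_neq0); rewrite mulfV //; apply: (mulfI x_neq0).
by rewrite mulr1 mulrA -expr2 -exprD add2n -cardF expf_card.
Qed.

Lemma card_unity_roots (F : finFieldType) d :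
  (d %| #|F|.-1)%N -> #|[set x : F | x ^+ d == 1]| = d.
Proof.
move=> dvd_d; have N_gt0 : (0 < #|F|.-1)%N by rewrite -subn1 subn_gt0 finNzRing_gt1.
have d_gt0 : (0 < d)%N by apply: dvdn_gt0 dvd_d.
have /hasP[z _ z_prim] : has (#|F|.-1).-primitive_root (enum (predC1 (0 : F))).
  apply: has_prim_root N_gt0 _ (enum_uniq _) _; last by rewrite -cardE cardC1.
  apply/allP=> x; rewrite mem_enum /= unity_rootE => x_neq0.
  by rewrite -(inj_eq (mulfI x_neq0)) mulr1 -exprS prednK ?expf_card // ltnW ?finNzRing_gt1.
have w_prim := dvdn_prim_root z_prim dvd_d; set w := z ^+ _ in w_prim.
have -> : [set x : F | x ^+ d == 1] = [set w ^+ i | i : 'I_d].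
  apply/setP=> x; rewrite inE; apply/eqP/imsetP => [/(prim_rootP w_prim)[i ->]|[i _ ->]].
    by exists i.
  by rewrite -exprM mulnC exprM (prim_expr_order w_prim) expr1n.
rewrite card_imset ?card_ord // => i j /eqP.
by rewrite (eq_prim_root_expr w_prim) !modn_small // => /eqP/val_inj.
Qed.

Lemma Kdim1 k : Kdim k 1 = k.
Proof. by rewrite /Kdim expn0 mul1n. Qed.

Lemma KdimS k i : (0 < i)%N -> Kdim k i.+1 = (3 * Kdim k i)%N.
Proof. by case: i => // i _; rewrite /Kdim !subn1 /= expnS mulnA. Qed.

Lemma Kdim_gt1 k i : (1 < k)%N -> (1 < Kdim k i)%N.
Proof. by move=> k_gt1; apply: leq_trans k_gt1 _; rewrite leq_pmull ?expn_gt0. Qed.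

Lemma Kdim_dvd k e i : (0 < i <= e)%N -> (3 * Kdim k i %| 3 ^ e * k)%N.
Proof.
case/andP=> i_gt0 le_ie; rewrite -KdimS // /Kdim subSS subn0.
by rewrite dvdn_mul // dvdn_exp2l.
Qed.

Lemma D1_Dstep (L : finFieldType) q (om gam : nat -> L) k :
  D1 q om gam k = Dstep q om gam k 1 [set Fq L q k].
Proof.
rewrite /D1 /Dstep Kdim1; apply: eq_bigr => a _; apply: eq_bigr => j _.
by rewrite big_set1 /orb; apply: eq_imset => b; rewrite -imset_comp.
Qed.

Definition Dcode_size q k e : nat :=
  \prod_(t < e) (q ^ Kdim k t.+1 * (q ^ (3 * Kdim k t.+1) - 1)).

Section Subfields.
Variables (L : finFieldType) (q : nat).
Hypothesis q_pchar : [pchar L].-nat q.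

Lemma Fq_divring_closed m : divring_closed (Fq L q m).
Proof.
have frobB (x y : L) : (x - y) ^+ (q ^ m)%N = x ^+ (q ^ m)%N - y ^+ (q ^ m)%N.
  by rewrite exprDn_pchar ?exprNn_pchar // pnatX q_pchar.
split=> [|x y|x y]; rewrite !inE ?expr1n // => /eqP xq /eqP yq.
  by rewrite frobB xq yq.
by rewrite exprMn exprVn xq yq.
Qed.

HB.instance Definition _ m :=
  GRing.isDivringClosed.Build L (pred_of_set (Fq L q m)) (Fq_divring_closed m).

Lemma Fq_subset m d : (m %| d)%N -> {subset Fq L q m <= Fq L q d}.
Proof.
case/dvdnP=> t -> x; rewrite !inE => /eqP xq; apply/eqP.
elim: t => [|t IH]; first by rewrite mul0n expn0 expr1.
by rewrite mulSn expnD exprM xq IH.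
Qed.

Lemma Fq_subset_mull d m : {subset Fq L q m <= Fq L q (d * m)}.
Proof. exact/Fq_subset/dvdn_mull. Qed.

Lemma card_base_gt1 n : #|L| = (q ^ n)%N -> (1 < q)%N.
Proof.
move=> cardL; have := finNzRing_gt1 L; rewrite cardL.
by case: q q_pchar => [|[|]] //; rewrite exp1n.
Qed.

Lemma card_Fq n m :
  #|L| = (q ^ n)%N -> (0 < m)%N -> (m %| n)%N -> #|Fq L q m| = (q ^ m)%N.
Proof.
move=> cardL m_gt0 /dvdnP[t nE].
have qm_gt1 : (1 < q ^ m)%N by rewrite -(expn0 q) ltn_exp2l ?(card_base_gt1 cardL).
set d := (q ^ m - 1)%N.
have qmE : (q ^ m = d.+1)%N by rewrite /d subn1 prednK // ltnW.
have -> : Fq L q m = 0 |: [set x : L | x ^+ d == 1].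
  apply/setP=> x; rewrite !inE qmE exprS.
  have [-> | x_neq0] := eqVneq x 0; first by rewrite mul0r eqxx.
  by rewrite -[X in _ == X]mulr1 (inj_eq (mulfI x_neq0)).
have d_gt0 : (0 < d)%N by rewrite /d subn_gt0.
rewrite cardsU1 inE expr0n gtn_eqF //= eq_sym oner_eq0 card_unity_roots ?add1n //.
by rewrite cardL nE mulnC expnM -subn1 subn1_dvd_expn.
Qed.

Lemma card_Fq_nz n m :
  #|L| = (q ^ n)%N -> (0 < m)%N -> (m %| n)%N -> #|Fq L q m :\ 0| = (q ^ m - 1)%N.
Proof.
move=> cardL m_gt0 mn; have := cardsD1 0 (Fq L q m).
by rewrite rpred0 (card_Fq cardL) // add1n => ->; rewrite subn1.
Qed.

Section CubicExtension.
Variables (n K : nat) (g : L).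
Hypotheses (cardL : #|L| = (q ^ n)%N) (K_gt0 : (0 < K)%N) (dvd_3K_n : (3 * K %| n)%N)
  (g_in : g \in Fq L q (3 * K))
  (g_gen : gen_field (Fq L q K :|: [set g]) = Fq L q (3 * K)).

Local Notation F := (Fq L q K).
Local Notation E := (Fq L q (3 * K)).

Lemma gen_sqr_notin_span s t : s \in F -> t \in F -> g ^+ 2 != s + t * g.
Proof.
move=> sF tF; apply/eqP => g2E.
pose S := [set a + c * g | a in F, c in F].
have memS a c : a \in F -> c \in F -> a + c * g \in S.
  by move=> aF cF; apply/imset2P; exists a c.
have S_sub : {in S &, forall x y, x - y \in S}.
  move=> _ _ /imset2P[a1 c1 a1F c1F ->] /imset2P[a2 c2 a2F c2F ->].
  have -> : a1 + c1 * g - (a2 + c2 * g) = (a1 - a2) + (c1 - c2) * g by ring.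
  by rewrite memS ?rpredB.
have S_mul : {in S &, forall x y, x * y \in S}.
  move=> _ _ /imset2P[a1 c1 a1F c1F ->] /imset2P[a2 c2 a2F c2F ->].
  have -> : (a1 + c1 * g) * (a2 + c2 * g)
      = a1 * a2 + (a1 * c2 + c1 * a2) * g + c1 * c2 * g ^+ 2 by ring.
  rewrite g2E.
  have -> : a1 * a2 + (a1 * c2 + c1 * a2) * g + c1 * c2 * (s + t * g)
      = (a1 * a2 + c1 * c2 * s) + (a1 * c2 + c1 * a2 + c1 * c2 * t) * g by ring.
  by rewrite memS ?rpredD ?rpredM.
have F_S a : a \in F -> a \in S by move=> aF; rewrite -[a]addr0 -(mul0r g) memS ?rpred0.
have S1 : 1 \in S by rewrite F_S ?rpred1.
have S_subfield : is_subfield S.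
  apply/and4P; split=> //; first exact/F_S/rpred0.
    by apply/forall_inP=> x xS; apply/forall_inP=> y yS; rewrite S_sub ?S_mul.
  by apply/forall_inP; apply: finField_invr_closed.
have E_S : E \subset S.
  rewrite -g_gen; apply: bigcap_inf; rewrite S_subfield /=.
  apply/subsetP=> x; rewrite in_setU in_set1 => /orP[xF | /eqP->]; first exact: F_S.
  by rewrite -[g]add0r -[g]mul1r memS ?rpred0 ?rpred1.
have := subset_leq_card E_S; rewrite (card_Fq cardL) ?muln_gt0 //.
rewrite /S curry_imset2X => /leq_trans/(_ (leq_imset_card _ _)).
rewrite cardsX (card_Fq cardL) ?(dvdn_trans (dvdn_mull 3 (dvdnn K))) // -expnD.
by rewrite leq_exp2l ?(card_base_gt1 cardL); lia.
Qed.

Lemma cubic_coord_eq0 x y z : x \in F -> y \in F -> z \in F ->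
  x + y * g + z * g ^+ 2 = 0 -> [/\ x = 0, y = 0 & z = 0].
Proof.
move=> xF yF zF h.
have z0 : z = 0.
  have xzF : - x / z \in F by rewrite rpredM ?rpredN ?rpredV.
  have yzF : - y / z \in F by rewrite rpredM ?rpredN ?rpredV.
  have := gen_sqr_notin_span xzF yzF; apply: contraTeq => z_neq0.
  have zg2 : z * g ^+ 2 = - x - y * g by apply/eqP; rewrite -subr_eq0 -h; apply/eqP; ring.
  by rewrite negbK; apply/eqP/(mulfI z_neq0); rewrite zg2; field.
move: h; rewrite z0 mul0r addr0 => h.
have y0 : y = 0.
  have xyF : - x / y \in F by rewrite rpredM ?rpredN ?rpredV.
  have := gen_sqr_notin_span (rpred0 _) xyF; apply: contraTeq => y_neq0.
  have yg : y * g = - x by apply/eqP; rewrite -subr_eq0 -h; apply/eqP; ring.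
  have gE : g = - x / y by apply: (mulfI y_neq0); rewrite yg; field.
  by rewrite negbK add0r -gE expr2.
by move: h; rewrite y0 mul0r addr0.
Qed.

Lemma cubic_coord_inj x y z x' y' z' :
  x \in F -> y \in F -> z \in F -> x' \in F -> y' \in F -> z' \in F ->
  x + y * g + z * g ^+ 2 = x' + y' * g + z' * g ^+ 2 -> [/\ x = x', y = y' & z = z'].
Proof.
move=> xF yF zF x'F y'F z'F /eqP; rewrite -subr_eq0 => /eqP h.
have [] := @cubic_coord_eq0 (x - x') (y - y') (z - z'); rewrite ?rpredB //.
  by rewrite -[RHS]h; ring.
by move=> /subr0_eq-> /subr0_eq-> /subr0_eq->.
Qed.

Lemma cubic_coord_surj b : b \in E ->
  exists x y z, [/\ x \in F, y \in F, z \in F & b = x + y * g + z * g ^+ 2].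
Proof.
move=> bE; pose f (t : L * L * L) := t.1.1 + t.1.2 * g + t.2 * g ^+ 2.
have F_E := @Fq_subset_mull 3 K.
have imf_E : f @: setX (setX F F) F \subset E.
  apply/subsetP=> v /imsetP[[[x y] z]]; rewrite !in_setX /= => /andP[/andP[xF yF] zF] ->.
  by rewrite /f /= !rpredD ?rpredM ?rpredX ?g_in ?F_E.
have card_imf : #|f @: setX (setX F F) F| = #|E|.
  have F_dvd : (K %| n)%N := dvdn_trans (dvdn_mull 3 (dvdnn K)) dvd_3K_n.
  rewrite card_in_imset; first rewrite !cardsX !(card_Fq cardL) ?muln_gt0 // -!expnD.
    by congr (_ ^ _)%N; lia.
  move=> [[x y] z] [[x' y'] z']; rewrite !in_setX /=.
  move=> /andP[/andP[xF yF] zF] /andP[/andP[x'F y'F] z'F].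
  by move=> /(cubic_coord_inj xF yF zF x'F y'F z'F) [-> -> ->].
have := bE; rewrite -(subset_cardP card_imf imf_E).
case/imsetP=> [[[x y] z]]; rewrite !in_setX /= => /andP[/andP[xF yF] zF] ->.
by exists x, y, z.
Qed.

End CubicExtension.

(* The sets that the construction feeds into the next step: stability under F_q^* makes
   the fibres of (a, j, U, β) |-> β Φ_{a,j}(U) exactly the F_q^*-multiples of β. *)
Definition admissible m (U : {set L}) :=
  [/\ U \subset Fq L q m, (q < #|U|)%N & {in Fq L q 1 :\ 0 & U, forall c u, c * u \in U}].

Lemma Fq_admissible n m :
  #|L| = (q ^ n)%N -> (1 < m)%N -> (m %| n)%N -> admissible m (Fq L q m).
Proof.
move=> cardL m_gt1 dvd_m_n; split=> //.
  by rewrite (card_Fq cardL) ?(ltnW m_gt1) // -{1}(expn1 q) ltn_exp2l ?(card_base_gt1 cardL).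
by move=> c u /setD1P[_ cF1] uF; rewrite rpredM ?(Fq_subset (dvd1n m) cF1).
Qed.

Section Lift.
Variables (n k i : nat) (om gam : nat -> L).
Local Notation K := (Kdim k i).
Local Notation F := (Fq L q K).
Local Notation E := (Fq L q (3 * K)).
Local Notation w := (om i).
Local Notation g := (gam i).
Local Notation coef a j u := (om i ^+ j * (u ^+ q + a * u)).
Hypotheses (cardL : #|L| = (q ^ n)%N) (k_gt1 : (1 < k)%N) (dvd_3K_n : (3 * K %| n)%N)
  (w_prim : primitive_in q K w) (g_in : g \in E) (g_gen : gen_field (F :|: [set g]) = E).

Let q_gt1 : (1 < q)%N := card_base_gt1 cardL.
Let K_gt0 : (0 < K)%N := ltnW (Kdim_gt1 i k_gt1).
Let dvd_K_n : (K %| n)%N := dvdn_trans (dvdn_mull 3 (dvdnn K)) dvd_3K_n.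
Let K3_gt0 : (0 < 3 * K)%N := leq_trans K_gt0 (leq_pmull K (isT : (0 < 3)%N)).
Let coord_inj := cubic_coord_inj cardL K_gt0 dvd_3K_n g_in g_gen.
Let coord_surj := cubic_coord_surj cardL K_gt0 dvd_3K_n g_in g_gen.

Local Notation phi := (Phi q om gam i).

Lemma om_prim_root : (q ^ K - 1).-primitive_root w.
Proof.
case: w_prim => wF w_gen; have qK_gt3 : (3 < q ^ K)%N.
  apply: leq_trans (leq_pexp2l (ltnW q_gt1) (Kdim_gt1 i k_gt1)).
  by rewrite (@leq_exp2r 2 q 2).
have w_neq0 : w != 0.
  apply: contraTneq qK_gt3 => w0; rewrite -leqNgt.
  have : F :\ 0 \subset [set 1].
    apply/subsetP=> x /setD1P[x_neq0 xF]; have [t xE] := w_gen x xF x_neq0.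
    by move: x_neq0; rewrite xE w0 inE; case: t {xE} => [|t]; rewrite ?expr0 // exprS mul0r eqxx.
  by move/subset_leq_card; rewrite cards1 (card_Fq_nz cardL) //; lia.
have N_gt0 : (0 < q ^ K - 1)%N by lia.
have wN : w ^+ (q ^ K - 1) = 1.
  apply: (mulfI w_neq0); rewrite mulr1 -exprS subn1 prednK ?expn_gt0 ?(ltnW q_gt1) //.
  by move: wF; rewrite inE => /eqP.
have [m m_prim m_dvd] := prim_order_exists N_gt0 wN.
have : F :\ 0 \subset [set w ^+ val t | t : 'I_m].
  apply/subsetP=> x /setD1P[x_neq0 xF]; have [t ->] := w_gen x xF x_neq0.
  apply/imsetP; exists (Ordinal (ltn_pmod t (prim_order_gt0 m_prim))) => //=.
  by rewrite (prim_expr_mod m_prim).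
move/subset_leq_card/leq_trans/(_ (leq_imset_card _ _)).
rewrite card_ord (card_Fq_nz cardL) // => le_N_m.
suff -> : (q ^ K - 1)%N = m by [].
by apply/eqP; rewrite eqn_leq le_N_m dvdn_leq.
Qed.

Lemma om_neq0 : w != 0.
Proof. by rewrite (prim_root_eq0 om_prim_root) subn_eq0 -ltnNge -(expn0 q) ltn_exp2l. Qed.

Lemma om_expr_eq j j' x : (j < q - 1)%N -> (j' < q - 1)%N -> x \in F -> x != 0 ->
  w ^+ j = w ^+ j' * x ^+ (q - 1) -> j = j' /\ x ^+ (q - 1) = 1.
Proof.
move=> lt_j lt_j' xF x_neq0 wj; case: w_prim => _ w_gen.
have [t xE] := w_gen x xF x_neq0.
suff jj' : j = j' by split=> //; apply: (mulfI (expf_neq0 j' om_neq0)); rewrite -wj jj' mulr1.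
move: wj; rewrite xE -exprM -exprD => /eqP; rewrite (eq_prim_root_expr om_prim_root).
move=> /eqP/(congr1 (modn^~ (q - 1)%N)).
by rewrite !(modn_dvdm _ (subn1_dvd_expn q K)) addnC modnMDl !modn_small.
Qed.

Lemma Phi_coef_in a j u : a \in F -> u \in F -> coef a j u \in F.
Proof.
case: w_prim => wF _ aF uF.
exact: rpredM (rpredX _ wF) (rpredD (rpredX _ uF) (rpredM aF uF)).
Qed.

Lemma Phi_in a j u : a \in F -> u \in F -> phi a j u \in E.
Proof.
move=> aF uF; have F_E := @Fq_subset_mull 3 K.
by apply: rpredD (F_E _ uF) (rpredM (F_E _ (Phi_coef_in j aF uF)) g_in).
Qed.

Lemma Phi_inj a j u v : a \in F -> u \in F -> v \in F -> phi a j u = phi a j v -> u = v.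
Proof.
move=> aF uF vF; rewrite /Phi -[_ + _]addr0 -[X in _ = X]addr0 -(mul0r (g ^+ 2)).
by case/coord_inj; rewrite ?Phi_coef_in ?rpred0.
Qed.

Lemma Phi_scale c a j u : c ^+ q = c -> phi a j (c * u) = c * phi a j u.
Proof. by move=> cq; rewrite /Phi exprMn cq; ring. Qed.

(* The γ^2-coordinate of b Φ_{a,j}(u) is (y + z c2) ω^j u^q + ((y + z c2) ω^j a + z) u,
   where b = x + y γ + z γ^2 and γ^3 = c0 + c1 γ + c2 γ^2. *)
Lemma Phi_span_scalar_in b a j (U : {set L}) :
  b \in E -> a \in F -> U \subset F -> (q < #|U|)%N ->
  {in U, forall u, exists v v', [/\ v \in F, v' \in F & b * phi a j u = v + v' * g]} ->
  b \in F.
Proof.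
move=> bE aF UF cardU b_span.
have [x [y [z [xF yF zF bxyz]]]] := coord_surj bE.
have [c0 [c1 [c2 [c0F c1F c2F g3]]]] := coord_surj (rpredX 3 g_in).
suff [y0 z0] : y = 0 /\ z = 0 by rewrite bxyz y0 z0 !mul0r !addr0.
have [al0 be0] : (y + z * c2) * w ^+ j = 0 /\ (y + z * c2) * w ^+ j * a + z = 0.
  apply: (coef_XqX_eq0 q_gt1 cardU) => u uU; have uF := subsetP UF u uU.
  have [v [v' [vF v'F bu]]] := b_span u uU; set f := coef a j u.
  have fF : f \in F by apply: Phi_coef_in.
  have coord0 : x * u + z * f * c0 \in F := rpredD (rpredM xF uF) (rpredM (rpredM zF fF) c0F).
  have coord1 : x * f + y * u + z * f * c1 \in F :=
    rpredD (rpredD (rpredM xF fF) (rpredM yF uF)) (rpredM (rpredM zF fF) c1F).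
  have coord2 : y * f + z * u + z * f * c2 \in F :=
    rpredD (rpredD (rpredM yF fF) (rpredM zF uF)) (rpredM (rpredM zF fF) c2F).
  suff /(coord_inj coord0 coord1 coord2 vF v'F (rpred0 _))[_ _ <-] :
      (x * u + z * f * c0) + (x * f + y * u + z * f * c1) * g
      + (y * f + z * u + z * f * c2) * g ^+ 2 = v + v' * g + 0 * g ^+ 2.
    by rewrite /f; ring.
  rewrite mul0r addr0 -bu bxyz /Phi -/f.
  have -> : (x + y * g + z * g ^+ 2) * (u + f * g) =
    x * u + (x * f + y * u) * g + (y * f + z * u) * g ^+ 2 + z * f * g ^+ 3 by ring.
  by rewrite g3; ring.
have z0 : z = 0 by move: be0; rewrite al0 mul0r add0r.
split=> //; apply/eqP; move: al0; rewrite z0 mul0r addr0 => /eqP.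
by rewrite mulf_eq0 expf_eq0 (negbTE om_neq0) andbF orbF.
Qed.

Lemma Phi_match_base x a a' j j' (U U' : {set L}) :
  x \in F -> x != 0 -> a \in F -> a' \in F -> (j < q - 1)%N -> (j' < q - 1)%N ->
  U \subset F -> U' \subset F -> (q < #|U|)%N ->
  {in U, forall u, exists2 u', u' \in U' & x * phi a j u = phi a' j' u'} ->
  [/\ a = a', j = j', x ^+ q = x & {in U, forall u, x * u \in U'}].
Proof.
move=> xF x_neq0 aF a'F lt_j lt_j' UF U'F cardU x_match.
have x_coord u : u \in U -> x * u \in U' /\ x * coef a j u = coef a' j' (x * u).
  move=> uU; have [u' u'U xu] := x_match u uU.
  have uF := subsetP UF u uU; have u'F := subsetP U'F u' u'U.
  suff /(coord_inj (rpredM xF uF) (rpredM xF (Phi_coef_in j aF uF)) (rpred0 _)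
          u'F (Phi_coef_in j' a'F u'F) (rpred0 _))[-> -> _] :
      x * u + x * coef a j u * g + 0 * g ^+ 2 = u' + coef a' j' u' * g + 0 * g ^+ 2 by [].
  by rewrite !mul0r !addr0 -mulrA -mulrDr xu.
have [e1 e2] : x * w ^+ j - w ^+ j' * x ^+ q = 0 /\ x * w ^+ j * a - w ^+ j' * a' * x = 0.
  apply: (coef_XqX_eq0 q_gt1 cardU) => u uU; have [_ xu] := x_coord u uU.
  have : x * coef a j u - coef a' j' (x * u) = 0 by rewrite xu subrr.
  by rewrite exprMn => <-; ring.
have qE : q = (q - 1).+1 by lia.
have wj : w ^+ j = w ^+ j' * x ^+ (q - 1).
  apply: (mulfI x_neq0); apply/eqP; rewrite -subr_eq0 -e1 {2}qE exprS; apply/eqP; ring.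
have [jj' xq1] := om_expr_eq lt_j lt_j' xF x_neq0 wj.
split=> //; [|by rewrite qE exprS xq1 mulr1|by move=> u /x_coord[]].
have xw_neq0 : x * w ^+ j' != 0 by rewrite mulf_neq0 ?expf_neq0 ?om_neq0.
apply: (mulfI xw_neq0); apply/eqP; rewrite -subr_eq0 -e2 jj'; apply/eqP; ring.
Qed.

Lemma Phi_match b a a' j j' (U U' : {set L}) :
  b \in E -> b != 0 -> a \in F -> a' \in F -> (j < q - 1)%N -> (j' < q - 1)%N ->
  U \subset F -> U' \subset F -> (q < #|U|)%N ->
  {in U, forall u, exists2 u', u' \in U' & b * phi a j u = phi a' j' u'} ->
  [/\ a = a', j = j', b \in Fq L q 1 & {in U, forall u, b * u \in U'}].
Proof.
move=> bE b_neq0 aF a'F lt_j lt_j' UF U'F cardU b_match.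
have bF : b \in F.
  apply: (Phi_span_scalar_in (j := j) bE aF UF cardU) => u uU.
  have [u' u'U ->] := b_match u uU; have u'F := subsetP U'F u' u'U.
  by exists u', (coef a' j' u'); rewrite Phi_coef_in.
have [-> -> bq b_sub] := Phi_match_base bF b_neq0 aF a'F lt_j lt_j' UF U'F cardU b_match.
by split; rewrite // inE expn1 bq.
Qed.

Local Notation img a j U b := [set b * phi a j u | u in U].

Lemma Fq1_frob c : c \in Fq L q 1 -> c ^+ q = c.
Proof. by rewrite inE expn1 => /eqP. Qed.

Lemma Phi_img_scale c a j (U : {set L}) b :
  admissible K U -> c \in Fq L q 1 :\ 0 -> img a j U (c * b) = img a j U b.
Proof.
case=> _ _ U_stable c_in; have /setD1P[c_neq0 cF1] := c_in.
have cq := Fq1_frob cF1.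
apply/setP=> v; apply/imsetP/imsetP=> -[u uU ->].
  by exists (c * u); [exact: U_stable | rewrite Phi_scale // mulrCA mulrA].
have c'_in : c^-1 \in Fq L q 1 :\ 0 by rewrite in_setD1 invr_eq0 c_neq0 rpredV.
exists (c^-1 * u); first exact: U_stable.
by rewrite Phi_scale ?exprVn ?cq //; field.
Qed.

Lemma Phi_img_match a a' j j' (U U' : {set L}) b b' : b' != 0 -> img a j U b = img a' j' U' b' ->
  {in U, forall u, exists2 u', u' \in U' & b / b' * phi a j u = phi a' j' u'}.
Proof.
move=> b'_neq0 img_eq u uU.
have /imsetP[u' u'U bu] : b * phi a j u \in img a' j' U' b'.
  by rewrite -img_eq; apply/imsetP; exists u.
by exists u'; rewrite // mulrAC bu mulrC mulKf.
Qed.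

Lemma Phi_img_inj a a' j j' (U U' : {set L}) b b' :
  a \in F -> a' \in F -> (j < q - 1)%N -> (j' < q - 1)%N ->
  admissible K U -> admissible K U' -> b \in E :\ 0 -> b' \in E :\ 0 ->
  img a j U b = img a' j' U' b' ->
  [/\ a = a', j = j', U = U' & b' / b \in Fq L q 1 :\ 0].
Proof.
move=> aF a'F lt_j lt_j' [UF cardU U_st] [U'F cardU' U'_st].
move=> /setD1P[b_neq0 bE] /setD1P[b'_neq0 b'E] img_eq.
have bb'_E : b / b' \in E by rewrite rpredM ?rpredV.
have b'b_E : b' / b \in E by rewrite rpredM ?rpredV.
have [<- <- bb'F sub_U] := Phi_match bb'_E (mulf_neq0 b_neq0 (invr_neq0 b'_neq0))
  aF a'F lt_j lt_j' UF U'F cardU (Phi_img_match b'_neq0 img_eq).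
have [_ _ b'bF sub_U'] := Phi_match b'b_E (mulf_neq0 b'_neq0 (invr_neq0 b_neq0))
  a'F aF lt_j' lt_j U'F UF cardU' (Phi_img_match b_neq0 (esym img_eq)).
have bb'_in : b / b' \in Fq L q 1 :\ 0 by rewrite in_setD1 bb'F mulf_neq0 ?invr_eq0.
have b'b_in : b' / b \in Fq L q 1 :\ 0 by rewrite in_setD1 b'bF mulf_neq0 ?invr_eq0.
split=> //; apply/setP=> u; apply/idP/idP=> uU.
  suff <- : b' / b * (b / b' * u) = u by exact: U'_st _ _ b'b_in (sub_U u uU).
  by rewrite mulrA -[b' / b]invf_div mulVf ?mul1r // mulf_neq0 ?invr_eq0.
suff <- : b / b' * (b' / b * u) = u by exact: U_st _ _ bb'_in (sub_U' u uU).
by rewrite mulrA -[b / b']invf_div mulVf ?mul1r // mulf_neq0 ?invr_eq0.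
Qed.

Lemma Dstep_admissible (D : {set {set L}}) :
  {in D, forall U, admissible K U} ->
  {in Dstep q om gam k i D, forall W, admissible (3 * K) W}.
Proof.
move=> D_adm W /bigcupP[a aF /bigcupP[j _ /bigcupP[U UD /imsetP[b /setD1P[b_neq0 bE] ->]]]].
have [UF cardU U_st] := D_adm U UD; have uF u : u \in U -> u \in F by apply: (subsetP UF).
split.
- by apply/subsetP=> _ /imsetP[u uU ->]; apply: rpredM bE (Phi_in j aF (uF u uU)).
- rewrite card_in_imset // => u v uU vU /(mulfI b_neq0).
  exact: Phi_inj aF (uF u uU) (uF v vU).
- move=> c _ c_in /imsetP[u uU ->]; have /setD1P[_ cF1] := c_in.
  apply/imsetP; exists (c * u); first exact: U_st.
  by rewrite Phi_scale ?Fq1_frob // mulrCA.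
Qed.

Let index (D : {set {set L}}) := setX (setX (setX F [set: 'I_q.-1]) D) (E :\ 0).
Let word (x : L * 'I_q.-1 * {set L} * L) := img x.1.1.1 x.1.1.2 x.1.2 x.2.

Lemma Dstep_imset (D : {set {set L}}) : Dstep q om gam k i D = word @: index D.
Proof.
apply/setP=> W; apply/bigcupP/imsetP.
  case=> a aF /bigcupP[j _ /bigcupP[U UD /imsetP[b bE ->]]].
  by exists (a, j, U, b); rewrite // !in_setX aF UD bE in_setT.
case=> -[[[a j] U] b]; rewrite !in_setX /= => /andP[/andP[/andP[aF _] UD] bE] ->.
by exists a => //; apply/bigcupP; exists j => //; apply/bigcupP; exists U => //; apply: imset_f.
Qed.

Lemma word_fiber (D : {set {set L}}) : {in D, forall U, admissible K U} ->
  {in index D, forall x, #|[set y in index D | word y == word x]| = q.-1}.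
Proof.
move=> D_adm [[[a j] U] b]; rewrite !in_setX /= => /andP[/andP[/andP[aF _] UD] bE].
have -> : [set y in index D | word y == word (a, j, U, b)] =
          [set (a, j, U, c * b) | c in Fq L q 1 :\ 0].
  apply/setP=> -[[[a' j'] U'] b']; rewrite inE !in_setX /=; apply/andP/imsetP.
    case=> /andP[/andP[/andP[a'F _] U'D] b'E] /eqP/esym/Phi_img_inj[] //=; rewrite ?subn1 //.
    - exact: D_adm.
    - exact: D_adm.
    move=> <- /val_inj <- <- c_in; exists (b' / b) => //.
    by rewrite divfK //; case/setD1P: bE.
  case=> c c_in [-> -> -> ->]; split.
    have /setD1P[c_neq0 cF1] := c_in; have /setD1P[b_neq0 bE'] := bE.
    have cbE : c * b \in E := rpredM (Fq_subset (dvd1n _) cF1) bE'.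
    by rewrite aF UD in_setT in_setD1 mulf_neq0.
  by rewrite /word /= Phi_img_scale ?eqxx //; apply: D_adm.
rewrite card_imset; last by move=> c c' [] /(mulIf _); apply; case/setD1P: bE.
by rewrite (card_Fq_nz cardL) ?dvd1n // expn1 subn1.
Qed.

Lemma card_Dstep (D : {set {set L}}) : {in D, forall U, admissible K U} ->
  #|Dstep q om gam k i D| = (q ^ K * (q ^ (3 * K) - 1) * #|D|)%N.
Proof.
move=> D_adm; have := card_uniform_fibers (word_fiber D_adm).
rewrite -Dstep_imset !cardsX cardsT card_ord (card_Fq cardL) // (card_Fq_nz cardL) // => cardX.
have q1_gt0 : (0 < q.-1)%N by rewrite -subn1 subn_gt0.
by apply/eqP; rewrite -(eqn_pmul2l q1_gt0) -cardX; apply/eqP; ring.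
Qed.

End Lift.

Section Code.
Variables (e k : nat) (om gam : nat -> L).
Hypotheses (k_gt1 : (1 < k)%N) (cardL : #|L| = (q ^ (3 ^ e * k))%N)
  (choice : valid_choice q e k om gam).

Lemma Dstep_valid i (D : {set {set L}}) : (0 < i <= e)%N ->
  {in D, forall U, admissible (Kdim k i) U} ->
  {in Dstep q om gam k i D, forall W, admissible (3 * Kdim k i) W} /\
  #|Dstep q om gam k i D| = (q ^ Kdim k i * (q ^ (3 * Kdim k i) - 1) * #|D|)%N.
Proof.
move=> le_i D_adm; have [w_prim g_in g_gen] := choice le_i.
have dvd_3K_n := Kdim_dvd k le_i.
split; first exact: (Dstep_admissible cardL k_gt1 dvd_3K_n w_prim g_in g_gen D_adm).
exact: (card_Dstep cardL k_gt1 dvd_3K_n w_prim g_in g_gen D_adm).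
Qed.

Lemma Dcode_valid i : (0 < i <= e)%N ->
  {in Dcode q om gam k i, forall W, admissible (3 * Kdim k i) W} /\
  #|Dcode q om gam k i| = Dcode_size q k i.
Proof.
elim: i => [|[|i] IH] // le_i.
  have Fk_adm : {in [set Fq L q k], forall U, admissible (Kdim k 1) U}.
    by move=> U; rewrite in_set1 Kdim1 => /eqP->; apply: Fq_admissible cardL k_gt1 (dvdn_mull _ _).
  rewrite /= D1_Dstep; have [W_adm ->] := Dstep_valid le_i Fk_adm.
  by rewrite cards1 /Dcode_size big_ord1 muln1.
have [IH_adm IH_card] : {in Dcode q om gam k i.+1, forall W, admissible (Kdim k i.+2) W} /\
    #|Dcode q om gam k i.+1| = Dcode_size q k i.+1.
  by rewrite KdimS //; apply: IH; case/andP: le_i => _ /ltnW.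
have [W_adm ->] := Dstep_valid le_i IH_adm.
by split=> //; rewrite IH_card /Dcode_size [in RHS]big_ord_recr /= mulnC.
Qed.
End Code.

End Subfields.

Lemma prod_subr_ge (R : realDomainType) (I : Type) (r : seq I) (c : I -> R) :
  (forall i, 0 <= c i <= 1) -> 1 - \sum_(i <- r) c i <= \prod_(i <- r) (1 - c i).
Proof.
move=> c01; elim: r => [|i r IH]; first by rewrite !big_nil subr0.
rewrite !big_cons; have /andP[ci0 ci1] := c01 i.
have S0 : 0 <= \sum_(j <- r) c j by rewrite sumr_ge0 // => j _; case/andP: (c01 j).
have : (1 - c i) * (1 - \sum_(j <- r) c j) <= (1 - c i) * \prod_(j <- r) (1 - c j).
  by rewrite ler_wpM2l // subr_ge0.
nra.
Qed.

Lemma ratio_near1 (R : realFieldType) (P J M d e : R) :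
  0 < M -> M <= J -> J <= (1 + d) * M -> (1 - e) * M <= P -> P <= M ->
  0 <= d -> 0 <= e -> `|P / J - 1| <= d + e.
Proof.
move=> M_gt0 MJ Jd eP PM d_ge0 e_ge0; have J_gt0 : 0 < J by apply: lt_le_trans MJ.
have -> : P / J - 1 = (P - J) / J by field; rewrite gt_eqF.
rewrite normrM normfV (gtr0_norm J_gt0) ler_pdivrMr // ler_norml; apply/andP; split.
  have [c_ge0 | c_lt0] := lerP 0 (1 - d - e); last by nra.
  have : (1 - d - e) * J <= (1 - d - e) * ((1 + d) * M) by rewrite ler_wpM2l.
  nra.
nra.
Qed.

Lemma eventually_div_lt (C eps : rat) : 0 <= C -> 0 < eps ->
  exists N : nat, forall s : nat, (N <= s)%N -> C / s%:R < eps.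
Proof.
move=> C_ge0 eps_gt0; have Ceps_ge0 : 0 <= C / eps by rewrite divr_ge0 // ltW.
exists (Num.bound (C / eps)).+1 => s le_Ns.
have s_gt0 : 0 < s%:R :> rat by rewrite ltr0n; apply: leq_trans le_Ns.
rewrite ltr_pdivrMr // mulrC -ltr_pdivrMr //.
by apply: lt_le_trans (archi_boundP Ceps_ge0) _; rewrite ler_nat ltnW.
Qed.

Section JohnsonBound.
Variables (q n k : nat).
Hypotheses (q_gt1 : (1 < q)%N) (k_gt1 : (1 < k)%N) (le_kn : (k <= n)%N).

Local Notation m := (q ^ (n - k))%N.
Local Notation s := (q ^ (k - 1))%N.
Local Notation B := ((q ^ (n - 1) - 1) %/ (q ^ (k - 1) - 1))%N.

Let qn1E : (q ^ (n - 1) = m * s)%N.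
Proof. by rewrite -expnD; congr (_ ^ _)%N; lia. Qed.
Let qkE : (q ^ k = q * s)%N.
Proof. by rewrite -expnS; congr (_ ^ _)%N; lia. Qed.
Let qnE : (q ^ n = m * (q * s))%N.
Proof. by rewrite -qkE -expnD; congr (_ ^ _)%N; lia. Qed.
Let s_ge_q : (q <= s)%N.
Proof. by rewrite -{1}(expn1 q) leq_exp2l //; lia. Qed.
Let m_gt0 : (0 < m)%N.
Proof. by rewrite expn_gt0 ltnW. Qed.

Lemma Jq_ge : (m * m <= Jq q n k)%N.
Proof.
have B_ge : (m <= B)%N by rewrite leq_divRL ?subn_gt0 ?qn1E //; nia.
rewrite /Jq leq_divRL ?qkE ?subn_gt0 ?qnE; last by nia.
by rewrite -mulnA mulnC leq_mul //; nia.
Qed.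

Lemma Jq_mul_le : (Jq q n k * ((q * s - 1) * (s - 1)) <= m * m * (q * s * s))%N.
Proof.
have J_le : (Jq q n k * (q * s - 1) <= q ^ n * B)%N.
  by rewrite /Jq -qkE (leq_trans (leq_divM _ _)) // leq_mul2r leq_subr orbT.
have B_le : (B * (s - 1) <= m * s)%N by rewrite -qn1E (leq_trans (leq_divM _ _)) ?leq_subr.
rewrite mulnA; apply: leq_trans (leq_mul J_le (leqnn _)) _.
have -> : (m * m * (q * s * s) = m * (q * s) * (m * s))%N by ring.
by rewrite qnE -mulnA leq_mul2l B_le orbT.
Qed.

Lemma Jq_le : (Jq q n k)%:R <= (1 + 4 / s%:R) * (m * m)%:R :> rat.
Proof.
have s_gt1 : (1 < s)%N by apply: leq_trans s_ge_q.
have JD : (Jq q n k)%:R * ((q%:R * s%:R - 1) * (s%:R - 1))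
          <= (m * m)%:R * (q%:R * s%:R * s%:R) :> rat.
  have := Jq_mul_le; rewrite -(ler_nat rat) !natrM !natrB ?natrM // ?muln_gt0 ltnW //.
  by rewrite ltnW.
move: JD; set J : rat := (Jq q n k)%:R; set Q : rat := q%:R; set S : rat := s%:R.
set MM : rat := (m * m)%:R => JD.
have Q2 : 2 <= Q by rewrite ler_nat.
have QS : Q <= S by rewrite ler_nat.
have S_gt0 : 0 < S by rewrite ltr0n ltnW.
have MM_ge0 : 0 <= MM by [].
set D := (Q * S - 1) * (S - 1); have D_gt0 : 0 < D by rewrite /D; nra.
have poly : Q * S ^+ 3 <= (S + 4) * D by rewrite /D; nra.
have -> : (1 + 4 / S) * MM = (S + 4) * MM / S by field; rewrite gt_eqF.
rewrite ler_pdivlMr // -(ler_pM2r D_gt0).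
apply: le_trans (_ : MM * (Q * S ^+ 3) <= _); last first.
  by rewrite [(S + 4) * MM]mulrC -mulrA ler_wpM2l.
have -> : J * S * D = J * D * S by ring.
have -> : MM * (Q * S ^+ 3) = MM * (Q * S * S) * S by rewrite !exprS expr0; ring.
by rewrite ler_wpM2r // ltW.
Qed.

End JohnsonBound.

Section CodeSize.
Variables (q k e : nat).
Hypothesis q_gt0 : (0 < q)%N.

Local Notation n := (3 ^ e * k)%N.
Local Notation x t := (q ^ Kdim k t.+1)%N.
Local Notation y t := (q ^ (3 * Kdim k t.+1))%N.

Lemma prod_Kdim : (\prod_(t < e) (x t * y t) = q ^ (n - k) * q ^ (n - k))%N.
Proof.
rewrite -expnD; under eq_bigr do rewrite -expnD; rewrite -expn_sum; congr (_ ^ _)%N.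
elim: e => [|e' IH]; first by rewrite big_ord0 expn0 mul1n subnn.
rewrite big_ord_recr /= IH /Kdim subn1 /= expnS.
have : (k <= 3 ^ e' * k)%N by rewrite leq_pmull ?expn_gt0.
lia.
Qed.

Lemma Dcode_size_le : (Dcode_size q k e <= q ^ (n - k) * q ^ (n - k))%N.
Proof. by rewrite -prod_Kdim; apply: leq_prod => t _; rewrite leq_mul2l leq_subr orbT. Qed.

Lemma Dcode_size_ge :
  (1 - e%:R / (q ^ (3 * k))%:R) * (q ^ (n - k) * q ^ (n - k))%:R <= (Dcode_size q k e)%:R :> rat.
Proof.
have y_gt0 t : (0 < y t)%N by rewrite expn_gt0 q_gt0.
rewrite -prod_Kdim /Dcode_size !natr_prod.
have -> : \prod_(t < e) ((x t * (y t - 1))%N)%:R =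
          \prod_(t < e) ((x t * y t)%N)%:R * \prod_(t < e) (1 - ((y t)%:R)^-1 : rat).
  rewrite -big_split; apply: eq_bigr => t _ /=.
  by rewrite !natrM natrB // !mulrBr !mulr1 mulfK // pnatr_eq0 -lt0n.
rewrite mulrC; apply: ler_wpM2l; first exact: prodr_ge0.
have y_inv01 t : 0 <= ((y t)%:R : rat)^-1 <= 1.
  by rewrite invr_ge0 ler0n invf_le1 ?ltr0n ?ler1n ?y_gt0.
apply: le_trans (prod_subr_ge _ (fun t : 'I_e => y_inv01 t)).
rewrite lerD2l lerN2 -[e in e%:R / _]card_ord -sum1_card natr_sum mulr_suml.
apply: ler_sum => t _; rewrite mul1r lef_pV2 ?posrE ?ltr0n ?expn_gt0 ?q_gt0 // ler_nat.
by rewrite leq_pexp2l // leq_mul2l leq_pmull ?expn_gt0.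
Qed.

End CodeSize.

Lemma Dcode_size_near_Jq q k e : (1 < q)%N -> (1 < k)%N ->
  `|(Dcode_size q k e)%:R / (Jq q (3 ^ e * k) k)%:R - 1| <= (e%:R + 4) / (q ^ (k - 1))%:R :> rat.
Proof.
move=> q_gt1 k_gt1; set s := (q ^ (k - 1))%N.
have le_kn : (k <= 3 ^ e * k)%N by rewrite leq_pmull ?expn_gt0.
have s_gt0 : 0 < s%:R :> rat by rewrite ltr0n expn_gt0 ltnW.
have le_s_qk : (s <= q ^ (3 * k))%N by rewrite leq_exp2l //; lia.
rewrite [X in _ <= X]mulrDl [X in _ <= X]addrC.
apply: (ratio_near1 (M := (q ^ (3 ^ e * k - k) * q ^ (3 ^ e * k - k))%N%:R)).
- by rewrite ltr0n muln_gt0 expn_gt0 ltnW.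
- by rewrite ler_nat Jq_ge.
- exact: Jq_le.
- apply: le_trans _ (Dcode_size_ge k e (ltnW q_gt1)).
  have T_gt0 : 0 < (q ^ (3 * k))%:R :> rat by rewrite ltr0n expn_gt0 ltnW.
  have inv_le : ((q ^ (3 * k))%:R : rat)^-1 <= (s%:R)^-1.
    by rewrite lef_pV2 ?posrE // ler_nat.
  apply: ler_wpM2r; first exact: ler0n.
  by rewrite lerD2l lerN2 ler_wpM2l.
- by rewrite ler_nat; apply: Dcode_size_le; apply: ltnW.
- by rewrite divr_ge0.
- by rewrite divr_ge0.
Qed.

Lemma prime_power_pchar (L : finFieldType) q n :
  prime_power q -> #|L| = (q ^ n)%N -> [pchar L].-nat q.
Proof.
case=> p [r [p_pr [r_gt0 ->]]] cardL.
have pL : p \in [pchar L] by apply: (@card_finPcharP _ _ (r * n)); rewrite // cardL expnM.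
by rewrite pnatX (pnatE _ p_pr) pL.
Qed.

Lemma code_ratio_near1 (L : finFieldType) q e k (om gam : nat -> L) :
  prime_power q -> (0 < e)%N -> (1 < k)%N -> #|L| = (q ^ (3 ^ e * k))%N ->
  valid_choice q e k om gam ->
  `|code_ratio q e k om gam - 1| <= (e%:R + 4) / (q ^ (k - 1))%:R.
Proof.
move=> q_pp e_gt0 k_gt1 cardL choice; have q_pchar := prime_power_pchar q_pp cardL.
have le_e : (0 < e <= e)%N by rewrite e_gt0 leqnn.
rewrite /code_ratio; have [_ ->] := Dcode_valid q_pchar k_gt1 cardL choice le_e.
exact: Dcode_size_near_Jq (card_base_gt1 q_pchar cardL) k_gt1.
Qed.

Theorem theorem4p6 :
  (* limit in k, q fixed *)
  (forall (q e : nat), prime_power q -> (2 <= e)%N ->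
     forall eps : rat, 0 < eps ->
     exists K0 : nat, forall k : nat, (2 <= k)%N -> (K0 <= k)%N ->
       forall (L : finFieldType) (om gam : nat -> L),
         #|L| = (q ^ (3 ^ e * k))%N -> valid_choice q e k om gam ->
         `|code_ratio q e k om gam - 1| < eps)
  /\
  (* limit in q (over prime powers), k fixed *)
  (forall (e k : nat), (2 <= e)%N -> (2 <= k)%N ->
     forall eps : rat, 0 < eps ->
     exists Q0 : nat, forall q : nat, prime_power q -> (Q0 <= q)%N ->
       forall (L : finFieldType) (om gam : nat -> L),
         #|L| = (q ^ (3 ^ e * k))%N -> valid_choice q e k om gam ->
         `|code_ratio q e k om gam - 1| < eps).
Proof.
have C_ge0 e : 0 <= e%:R + 4 :> rat by rewrite addr_ge0.
split.
- move=> q e q_pp e_ge2 eps eps_gt0; have [N N_ok] := eventually_div_lt (C_ge0 e) eps_gt0.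
  exists N => k k_gt1 le_Nk L om gam cardL choice.
  have q_gt1 := card_base_gt1 (prime_power_pchar q_pp cardL) cardL.
  apply: le_lt_trans (code_ratio_near1 q_pp (ltnW e_ge2) k_gt1 cardL choice) (N_ok _ _).
  by apply: leq_trans le_Nk _; have := ltn_expl (k - 1) q_gt1; lia.
- move=> e k e_ge2 k_gt1 eps eps_gt0; have [N N_ok] := eventually_div_lt (C_ge0 e) eps_gt0.
  exists N => q q_pp le_Nq L om gam cardL choice.
  have q_gt1 := card_base_gt1 (prime_power_pchar q_pp cardL) cardL.
  apply: le_lt_trans (code_ratio_near1 q_pp (ltnW e_ge2) k_gt1 cardL choice) (N_ok _ _).
  by apply: leq_trans le_Nq _; rewrite -{1}(expn1 q) leq_exp2l //; lia.
Qed.
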